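(* Let $W\in[0,1]^{k\times k}$ be a symmetric positive semidefinite matrix with unit diagonal, $\mu>0$, and consider linear utilities $u_i({\boldsymbol\theta})=W_i^\top{\boldsymbol\theta}$ with thresholds $\mu_i=\mu$ and strategy space $\mathbb{R}_+^k$. Let ${\boldsymbol\theta}^{\mathrm{eq}}$ be an optimal stable equilibrium, $I=\{i:\theta^{\mathrm{eq}}_i=0\}$, $\bar W$ and $\bar{\boldsymbol\theta}^{\mathrm{eq}}$ the restrictions of $W$ (rows and columns) and ${\boldsymbol\theta}^{\mathrm{eq}}$ to $[k]\setminus I$, and $B$ the submatrix of $W$ with rows indexed by $[k]\setminus I$ and columns indexed by $I$. If $\bar{\boldsymbol\theta}$ is an optimal solution of $\min_{\bf x}\{\mathbf{1}^\top{\bf x}:\bar W{\bf x}\ge\mu\mathbf{1},\ {\bf x}\ge\mathbf{0}\}$, then $B^\top(\bar{\boldsymbol\theta}^{\mathrm{eq}}-\bar{\boldsymbol\theta})=\mathbf{0}$.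
   Context: $W_i$ is the $i$-th column of $W$. ${\boldsymbol\theta}$ is feasible if $u_i({\boldsymbol\theta})\ge\mu$ for all $i$. A feasible ${\boldsymbol\theta}\in\mathbb{R}_+^k$ is a stable equilibrium if for no $i$ is there $0\le\theta_i'<\theta_i$ with $u_i(\theta_i',{\boldsymbol\theta}_{-i})\ge\mu$ (${\boldsymbol\theta}$ with $i$-th entry replaced). An optimal stable equilibrium minimizes $\mathbf{1}^\top{\boldsymbol\theta}$ among stable equilibria. *)

From mathcomp Require Import all_boot all_order all_algebra.
From mathcomp Require Import reals.
Set Implicit Arguments. Unset Strict Implicit. Unset Printing Implicit Defensive.
Import Order.TTheory GRing.Theory Num.Theory.
Local Open Scope ring_scope.

Section Defs.
Variables (R : realType) (k : nat).

Definition admissible_W (W : 'M[R]_k) : Prop :=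
  [/\ forall i j, 0 <= W i j <= 1,
      W^T = W,
      forall x : 'cV[R]_k, 0 <= (x^T *m W *m x) 0 0
    & forall i, W i i = 1].

Definition util (W : 'M[R]_k) (theta : 'cV[R]_k) (i : 'I_k) : R :=
  ((col i W)^T *m theta) 0 0.

Definition nonneg (theta : 'cV[R]_k) : Prop := forall j, 0 <= theta j 0.

Definition feasible (W : 'M[R]_k) (mu : R) (theta : 'cV[R]_k) : Prop :=
  forall i, mu <= util W theta i.

Definition replace (theta : 'cV[R]_k) (i : 'I_k) (t : R) : 'cV[R]_k :=
  \col_j (if j == i then t else theta j 0).

Definition stable_eq (W : 'M[R]_k) (mu : R) (theta : 'cV[R]_k) : Prop :=
  [/\ nonneg theta, feasible W mu theta &
      forall i, ~ (exists t, 0 <= t /\ t < theta i 0 /\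
                   mu <= util W (replace theta i t) i)].

Definition optimal_stable_eq (W : 'M[R]_k) (mu : R) (theta : 'cV[R]_k) : Prop :=
  stable_eq W mu theta /\
  forall theta', stable_eq W mu theta' ->
    \sum_j theta j 0 <= \sum_j theta' j 0.

(* Reduced LP on the index set J (= [k] \ I): vectors are represented by
   their entries on J (entries outside J are ignored). *)
Definition reduced_feasible (W : 'M[R]_k) (mu : R) (J : pred 'I_k)
    (x : 'cV[R]_k) : Prop :=
  (forall j, J j -> 0 <= x j 0) /\
  (forall i, J i -> mu <= \sum_(j | J j) W i j * x j 0).

Definition reduced_optimal (W : 'M[R]_k) (mu : R) (J : pred 'I_k)
    (x : 'cV[R]_k) : Prop :=
  reduced_feasible W mu J x /\
  forall y, reduced_feasible W mu J y ->
    \sum_(j | J j) x j 0 <= \sum_(j | J j) y j 0.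

End Defs.

From mathcomp Require Import all_boot all_order all_algebra.
From mathcomp Require Import reals.
From mathcomp Require Import ring lra.
Set Implicit Arguments. Unset Strict Implicit. Unset Printing Implicit Defensive.
Import Order.TTheory GRing.Theory Num.Theory.
Local Open Scope ring_scope.

(* A stable equilibrium is tight on its support (lowering a positive
   coordinate [j] changes [u_j] one-for-one since [W j j = 1]), so on its
   support [J] it solves [W theta_eq = mu 1]; hence it is feasible for the reduced LP and, by
   optimality, [1^T theta_bar <= 1^T theta_eq].  Pairing the constraints of
   [theta_bar] with [theta_eq] and using the symmetry of [W] gives
   [sum_J theta_eq_j ((W theta_bar)_j - mu) = mu (1^T theta_bar - 1^T theta_eq)
   <= 0], a sum of nonnegative terms, so [theta_bar] is tight on [J] as well.
   The difference [d = theta_eq - theta_bar], extended by zero off [J], thus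
   satisfies [(W d)_j = 0] on [J], so [d^T W d = 0]; for a positive
   semidefinite [W] this forces [W d = 0], whose [I]-rows are the claim. *)

Section PsdIsotropic.
Variables (R : realFieldType) (n : nat).
Implicit Types (W : 'M[R]_n) (x y : 'cV[R]_n).

Definition qform W x : R := (x^T *m W *m x) 0 0.

Lemma qformD W x y : W^T = W ->
  qform W (x + y) = qform W x + 2 * (y^T *m W *m x) 0 0 + qform W y.
Proof.
move=> WT; have sym : (x^T *m W *m y) 0 0 = (y^T *m W *m x) 0 0.
  by rewrite -[x^T *m W *m y]trmxK mxE !trmx_mul trmxK WT mulmxA.
have addE (A B : 'M[R]_1) : (A + B) 0 0 = A 0 0 + B 0 0 by rewrite mxE.
rewrite /qform mulmxDr [(x + y)^T]linearD /= !mulmxDl !addE sym; ring.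
Qed.

Lemma qformZ W t x : qform W (t *: x) = t ^+ 2 * qform W x.
Proof.
rewrite /qform [(t *: x)^T]linearZ /= -!scalemxAl -scalemxAr scalerA.
by rewrite [((_ *: _ : 'M[R]_1) 0 0)]mxE expr2.
Qed.

Lemma quad_ge0_lin_eq0 (b c : R) :
  (forall t, 0 <= t * b + t ^+ 2 * c) -> b = 0.
Proof.
move=> quad_ge0; pose s := (`|c| + 1)^-1.
have s_gt0 : 0 < s by rewrite invr_gt0 ltr_wpDl.
have sc_lt1 : s * c < 1.
  rewrite mulrC ltr_pdivrMr ?ltr_wpDl // mul1r.
  by rewrite (le_lt_trans (ler_norm c)) // ltrDl.
have b2_le0 : b ^+ 2 * (s * (1 - s * c)) <= 0.
  rewrite -oppr_ge0.
  have -> : - (b ^+ 2 * (s * (1 - s * c))) =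
            - (s * b) * b + (- (s * b)) ^+ 2 * c by ring.
  exact: quad_ge0.
move: b2_le0; rewrite pmulr_lle0 ?mulr_gt0 ?subr_gt0 // => b2_le0.
by apply/eqP; rewrite -sqrf_eq0 eq_le b2_le0 sqr_ge0.
Qed.

Lemma psd_qform_eq0 W x : W^T = W -> (forall y, 0 <= qform W y) ->
  qform W x = 0 -> W *m x = 0.
Proof.
move=> WT psd qx0; apply/colP => i; rewrite [RHS]mxE.
have eiWx : ((delta_mx i 0 : 'cV[R]_n)^T *m W *m x) 0 0 = (W *m x) i 0.
  by rewrite trmx_delta -mulmxA -rowE mxE.
(* [q(x + t e_i) = 2 t (W x)_i + t^2 W_ii >= 0] for every [t]. *)
have : 2 * (W *m x) i 0 = 0.
  apply: (@quad_ge0_lin_eq0 _ (qform W (delta_mx i 0))) => t.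
  have := psd (x + t *: delta_mx i 0).
  rewrite qformD // qx0 add0r qformZ [(t *: _)^T]linearZ /= -!scalemxAl.
  by rewrite [((_ *: _ : 'M[R]_1) 0 0)]mxE eiWx mulrCA.
lra.
Qed.

End PsdIsotropic.

Section StableEquilibria.
Variables (R : realType) (k : nat).
Implicit Types (W : 'M[R]_k) (theta x y : 'cV[R]_k) (J : pred 'I_k).

Lemma util_mulmx W theta j : W^T = W -> util W theta j = (W *m theta) j 0.
Proof. by move=> WT; rewrite /util tr_col WT -row_mul mxE. Qed.

Lemma util_replace W theta j t : W j j = 1 ->
  util W (replace theta j t) j = util W theta j - theta j 0 + t.
Proof.
move=> Wjj; rewrite /util !mxE [in LHS](bigD1 j) // [in RHS](bigD1 j) //=.
rewrite !mxE eqxx Wjj.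
under eq_bigr => l /negbTE l_neq_j do rewrite !mxE l_neq_j.
under [in RHS]eq_bigr => l _ do rewrite !mxE.
ring.
Qed.

Lemma stable_eq_tight W mu theta j : W j j = 1 ->
  stable_eq W mu theta -> theta j 0 != 0 -> util W theta j = mu.
Proof.
move=> Wjj [nn feas stab] thj_neq0.
have thj_gt0 : 0 < theta j 0 by rewrite lt_def thj_neq0 nn.
apply/eqP; rewrite eq_le feas andbT leNgt; apply/negP => mu_lt_u.
pose t := Num.max 0 (theta j 0 - (util W theta j - mu)).
apply: (stab j); exists t; split; first by rewrite le_max lexx.
split; first by rewrite gt_max thj_gt0 /=; lra.
have : theta j 0 - (util W theta j - mu) <= t by rewrite le_max lexx orbT.
rewrite util_replace //; lra.
Qed.

Definition restrict J x : 'cV[R]_k := \col_j (if J j then x j 0 else 0).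

Lemma restrictB J x y : restrict J (x - y) = restrict J x - restrict J y.
Proof. by apply/colP => j; rewrite !mxE; case: ifP; rewrite ?subr0. Qed.

Lemma restrict_support x : restrict (fun j => x j 0 != 0) x = x.
Proof. by apply/colP => j; rewrite mxE; case: eqP. Qed.

Lemma mulmx_restrict (A : 'M[R]_k) J x i :
  (A *m restrict J x) i 0 = \sum_(j | J j) A i j * x j 0.
Proof.
rewrite mxE [RHS]big_mkcond /=; apply: eq_bigr => j _; rewrite mxE.
by case: ifP; rewrite ?mulr0.
Qed.

Lemma sum_mulmx_restrictC W J x y : W^T = W ->
  \sum_(j | J j) x j 0 * (W *m restrict J y) j 0 =
  \sum_(j | J j) y j 0 * (W *m restrict J x) j 0.
Proof.
move=> WT; have Wsym a b : W a b = W b a by rewrite -[in LHS]WT mxE.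
under eq_bigr => j _ do rewrite mulmx_restrict mulr_sumr.
under [in RHS]eq_bigr => j _ do rewrite mulmx_restrict mulr_sumr.
rewrite exchange_big /=; apply: eq_bigr => l _; apply: eq_bigr => j _.
by rewrite Wsym; ring.
Qed.

Lemma reduced_feasible_tight W mu J x y : W^T = W -> 0 <= mu ->
  reduced_feasible W mu J y -> (forall j, J j -> 0 <= x j 0) ->
  (forall j, J j -> (W *m restrict J x) j 0 = mu) ->
  \sum_(j | J j) y j 0 <= \sum_(j | J j) x j 0 ->
  forall j, J j -> x j 0 != 0 -> (W *m restrict J y) j 0 = mu.
Proof.
move=> WT mu_ge0 [_ y_feas] x_ge0 x_tight sum_le j Jj xj_neq0.
have slack_ge0 l : J l -> 0 <= x l 0 * ((W *m restrict J y) l 0 - mu).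
  by move=> Jl; rewrite mulr_ge0 ?x_ge0 // subr_ge0 mulmx_restrict y_feas.
have pairing : \sum_(l | J l) x l 0 * ((W *m restrict J y) l 0 - mu) =
               mu * (\sum_(l | J l) y l 0 - \sum_(l | J l) x l 0).
  under eq_bigr => l _ do rewrite mulrBr.
  rewrite sumrB sum_mulmx_restrictC //.
  under eq_bigr => l Jl do rewrite x_tight //.
  by rewrite -!mulr_suml mulrBr !(mulrC mu).
have sum_slack0 : \sum_(l | J l) x l 0 * ((W *m restrict J y) l 0 - mu) = 0.
  apply/eqP; rewrite eq_le sumr_ge0 // andbT pairing.
  by rewrite mulr_ge0_le0 // subr_le0.
have /eqP := psumr_eq0P slack_ge0 sum_slack0 Jj.
by rewrite mulf_eq0 (negbTE xj_neq0) subr_eq0 => /eqP.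
Qed.

End StableEquilibria.

Theorem lemma4 (R : realType) (k : nat) (W : 'M[R]_k) (mu : R)
    (theta_eq theta_bar : 'cV[R]_k) :
  admissible_W W -> 0 < mu ->
  optimal_stable_eq W mu theta_eq ->
  reduced_optimal W mu (fun j => theta_eq j 0 != 0) theta_bar ->
  forall i : 'I_k, theta_eq i 0 = 0 ->
    \sum_(j | theta_eq j 0 != 0) W j i * (theta_eq j 0 - theta_bar j 0) = 0.
Proof.
move=> [_ WT psd W1] mu_gt0 [eq_stable _] [bar_feas bar_min] i _.
set J := fun j => theta_eq j 0 != 0.
have [eq_ge0 _ _] := eq_stable.
have eq_tight j : J j -> (W *m restrict J theta_eq) j 0 = mu.
  move=> Jj; rewrite /J restrict_support -util_mulmx //.
  exact: stable_eq_tight.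
have eq_feas : reduced_feasible W mu J theta_eq.
  by split=> // j Jj; rewrite -mulmx_restrict eq_tight.
have bar_tight := reduced_feasible_tight WT (ltW mu_gt0) bar_feas
  (fun j _ => eq_ge0 j) eq_tight (bar_min _ eq_feas).
pose d := restrict J (theta_eq - theta_bar).
have Wd_J j : J j -> (W *m d) j 0 = 0.
  move=> Jj; rewrite /d restrictB mulmxBr mxE [X in _ + X]mxE.
  by rewrite eq_tight ?bar_tight ?subrr.
have qd0 : qform W d = 0.
  rewrite /qform -mulmxA [LHS]mxE; apply: big1 => j _.
  have [Jj | nJj] := boolP (J j); first by rewrite Wd_J ?mulr0.
  by rewrite mxE mxE (negbTE nJj) mul0r.
have /colP/(_ i) := psd_qform_eq0 WT psd qd0.
rewrite mulmx_restrict mxE => Wd_i; rewrite -[RHS]Wd_i; apply: eq_bigr => j _.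
by rewrite -[in LHS]WT !mxE.
Qed.
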